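(* Let $X\subset A^+$ be a finite set. Then $X$ is synchronized if and only if its degree $d(X)$ equals $1$.
   Context: A word $x\in A^*$ is synchronizing for $X$ if for all $u,v\in A^*$, $uxv\in X^*$ implies $ux\in X^*$ and $xv\in X^*$. $X$ is synchronized if there is a synchronizing word $x\in X^*$. The flower automaton of $X$ has states $\{(u,v)\in A^+\times A^+\mid uv\in X\}\cup\{\omega\}$, $\omega=(1,1)$ initial and terminal, and edges $(u,av)\xrightarrow{a}(ua,v)$ ($uav\in X$, $u,v\ne1$), $\omega\xrightarrow{a}(a,v)$ ($av\in X$, $v\ne1$), $(u,a)\xrightarrow{a}\omega$ ($ua\in X$, $u\ne1$), $\omega\xrightarrow{a}\omega$ ($a\in X$). For an automaton $\mathcal{A}$, $\varphi_\mathcal{A}(w)$ is the relation $\{(p,q)\mid$ there is a path $p\xrightarrow{w}q\}$. The rank of a relation $m$ on $Q$ is the least cardinality of a set $R$ with $m=uv$, $u\subseteq Q\times R$, $v\subseteq R\times Q$ (composition $uv=\{(p,q)\mid\exists r,(p,r)\in u,(r,q)\in v\}$). The degree $d(X)$ is the minimum rank of the nonempty relations in the monoid $\varphi_\mathcal{A}(A^* )$, where $\mathcal{A}$ is the flower automaton of $X$. *)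

From mathcomp Require Import all_boot.
Set Implicit Arguments. Unset Strict Implicit. Unset Printing Implicit Defensive.

Section Flower.
Variable A : finType.
Notation word := (seq A).
Variable X : seq word.

Definition inXstar (w : word) : Prop :=
  exists s : seq word, all (fun x => x \in X) s /\ flatten s = w.

Definition synchronizing (x : word) : Prop :=
  forall u v : word, inXstar (u ++ x ++ v) -> inXstar (u ++ x) /\ inXstar (x ++ v).

Definition synchronized : Prop := exists x, inXstar x /\ synchronizing x.

(* Flower automaton: states are pairs (u,v), plus omega = ([::],[::]). *)
Definition state := (word * word)%type.
Definition omega : state := ([::], [::]).
Definition is_state (p : state) : Prop :=
  p = omega \/ (p.1 != [::] /\ p.2 != [::] /\ p.1 ++ p.2 \in X).

Inductive edge : state -> A -> state -> Prop :=
| edge_mid u a v : u != [::] -> v != [::] -> u ++ a :: v \in X ->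
    edge (u, a :: v) a (rcons u a, v)
| edge_out a v : v != [::] -> a :: v \in X -> edge omega a ([:: a], v)
| edge_in u a : u != [::] -> rcons u a \in X -> edge (u, [:: a]) a omega
| edge_loop a : [:: a] \in X -> edge omega a omega.

Fixpoint phi (w : word) (p q : state) : Prop :=
  match w with
  | [::] => p = q /\ is_state p
  | a :: w' => exists r, edge p a r /\ phi w' r q
  end.

Definition has_rank_le (m : state -> state -> Prop) (k : nat) : Prop :=
  exists (u : state -> 'I_k -> Prop) (v : 'I_k -> state -> Prop),
    forall p q, m p q <-> exists r, u p r /\ v r q.

Definition is_rank (m : state -> state -> Prop) (k : nat) : Prop :=
  has_rank_le m k /\ forall j, has_rank_le m j -> k <= j.

Definition nonempty_rel (m : state -> state -> Prop) : Prop := exists p q, m p q.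

Definition is_degree (d : nat) : Prop :=
  (exists w, nonempty_rel (phi w) /\ is_rank (phi w) d) /\
  forall w k, nonempty_rel (phi w) -> is_rank (phi w) k -> d <= k.

End Flower.

(* The proof works with the flower automaton of X.  A path labelled w goes
   either through the central state omega, in which case w = p.2 z q.1 with
   z in X^*, or stays inside a single petal, in which case w is a proper
   factor of a word of X.  In particular w is in X^* iff w labels a loop at
   omega.

   On the rank side, a relation m has rank 1 iff it is nonempty and
   "rectangular": m p q and m p' q' imply m p q'.  Hence d(X) = 1 iff some
   phi(w) is nonempty and rectangular.

   (=>) If x is synchronizing, pad it with a word of X^* so that it is longer
   than every word of X; then every path labelled x^4 passes through omega
   and the synchronizing property lets us glue any start of one such path
   to any end of another: phi(x^4) is rectangular.
   (<=) If phi(w) is rectangular and p -w-> q, then x = p.1 w q.2 is in X^*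
   and synchronizing: in a loop u x v at omega, rectangularity reroutes the
   w-segment through q (resp. p), which splits the loop at omega. *)

From mathcomp Require Import all_boot zify.
Set Implicit Arguments. Unset Strict Implicit.

Definition rectangular (T : Type) (m : T -> T -> Prop) : Prop :=
  forall p q p' q', m p q -> m p' q' -> m p q'.

Lemma cat_split_prefix (T : Type) (a b c d : seq T) :
  a ++ b = c ++ d -> size a <= size c -> exists s, c = a ++ s /\ b = s ++ d.
Proof.
move=> E Hac; have Ea : take (size a) c = a.
  by rewrite -(takel_cat d Hac) -E take_size_cat.
exists (drop (size a) c); rewrite -{1}(cat_take_drop (size a) c) Ea; split => //.
rewrite -(drop_size_cat b (erefl (size a))) E drop_cat.
case: ltnP => // Hca.
have -> : size a = size c by apply/eqP; rewrite eqn_leq Hac.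
by rewrite subnn drop0 drop_size.
Qed.

Lemma cat_split_suffix (T : Type) (a b c d : seq T) :
  a ++ b = c ++ d -> size b <= size d -> exists t, d = t ++ b /\ a = c ++ t.
Proof.
move=> E Hbd; have /(congr1 rev) := E; rewrite !rev_cat => /cat_split_prefix.
case=> [|t [Ed Ea]]; first by rewrite !size_rev.
exists (rev t); split; first by rewrite -(revK d) Ed rev_cat revK.
by rewrite -(revK a) Ea rev_cat revK.
Qed.

Section Rank.
Variable A : finType.
Implicit Type m : state A -> state A -> Prop.

Lemma rank_pos m k : nonempty_rel m -> has_rank_le m k -> 0 < k.
Proof.
case=> p [q Hpq] [U [V E]]; case: k U V E => [|k] // U V E.
by have [[] ] := (E p q).1 Hpq.
Qed.

Lemma rank_le1_rectangular m : has_rank_le m 1 <-> rectangular m.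
Proof.
split.
- case=> U [V E] p q p' q' /E [r [Ur _]] /E [r' [_ Vr']].
  apply/E; exists r; split => //.
  by rewrite (ord1 r) -(ord1 r').
- move=> Hrect; exists (fun p (_ : 'I_1) => exists q, m p q).
  exists (fun (_ : 'I_1) q => exists p, m p q) => p q; split.
  + by move=> Hpq; exists ord0; split; [exists q | exists p].
  + by case=> _ [[q0 H1] [p0 H2]]; exact: Hrect H1 H2.
Qed.

Lemma is_rank_one m : nonempty_rel m -> is_rank m 1 <-> rectangular m.
Proof.
move=> Hne; split; first by case=> /rank_le1_rectangular.
by move=> /rank_le1_rectangular H1; split => // j; exact: rank_pos.
Qed.

Lemma degree_one_iff (X : seq (seq A)) :
  is_degree X 1 <-> exists w, nonempty_rel (phi X w) /\ rectangular (phi X w).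
Proof.
split.
- by case=> [[w [Hne Hr]] _]; exists w; split => //; apply/is_rank_one.
- case=> w [Hne Hr]; split; last by move=> w' k Hn [Hk _]; exact: rank_pos Hk.
  by exists w; split => //; apply/is_rank_one.
Qed.

End Rank.

Section FlowerPaths.
Variable A : finType.
Variable X : seq (seq A).
Local Notation omega := (omega A).

Lemma inXstar_nil : inXstar X [::].
Proof. by exists [::]. Qed.

Lemma inXstar_cat u v : inXstar X u -> inXstar X v -> inXstar X (u ++ v).
Proof.
case=> [s [Hs <-]] [t [Ht <-]]; exists (s ++ t).
by rewrite all_cat Hs Ht flatten_cat.
Qed.

Lemma inXstar_X y : y \in X -> inXstar X y.
Proof. by move=> Hy; exists [:: y]; rewrite /= Hy cats0. Qed.

Lemma state_Xstar q : is_state X q -> inXstar X (q.1 ++ q.2).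
Proof. by case=> [->|[_ [_ /inXstar_X]]] //; exact: inXstar_nil. Qed.

Lemma edge_states p a r : edge X p a r -> is_state X p /\ is_state X r.
Proof.
case=> [u b v Hu Hv Hm|b v Hv Hm|u b Hu Hm|b Hm]; rewrite /is_state /=.
- split; right; (split; [|split]) => //=; first by case: (u) Hu.
  by rewrite cat_rcons.
- by split; [left|right].
- by split; [right; rewrite cats1 | left].
- by split; left.
Qed.

Lemma phi_state_l w p q : phi X w p q -> is_state X p.
Proof. by case: w => [[-> ]|a w [r [/edge_states []]]]. Qed.

Lemma phi_state_r w p q : phi X w p q -> is_state X q.
Proof. by elim: w p => [|a w IH] p /=; [case=> <- | case=> r [_ /IH]]. Qed.

Lemma phi_cat s1 s2 p q :
  phi X (s1 ++ s2) p q <-> exists r, phi X s1 p r /\ phi X s2 r q.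
Proof.
elim: s1 p => [|a s1 IH] p /=.
- split; last by case=> r [[-> _] H].
  by move=> H; exists p; split => //; split => //; exact: phi_state_l H.
- split.
  + by case=> r [He /IH [r' [H1 H2]]]; exists r'; split => //; exists r.
  + by case=> r' [[r [He H1]] H2]; exists r; split => //; apply/IH; exists r'.
Qed.

Lemma petal_path u pre v : pre != [::] -> v != [::] -> pre ++ u ++ v \in X ->
  phi X u (pre, u ++ v) (pre ++ u, v).
Proof.
elim: u pre => [|a u IH] pre Hp Hv Hm /=.
- by rewrite cats0; split => //; right.
- exists (rcons pre a, u ++ v); split.
  + by apply: edge_mid => //; case: (u) Hv.
  + rewrite -cat_rcons; apply: IH => //; first by case: (pre).
    by rewrite cat_rcons.
Qed.

Lemma path_to_omega p : is_state X p -> phi X p.2 p omega.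
Proof.
case=> [->|]; first by split => //; left.
case: p => u v /= [Hu []]; case/lastP: v => [//|v a] _ Hm.
rewrite -cats1; apply/phi_cat; exists (u ++ v, [:: a]); split.
- by apply: petal_path; rewrite ?cats1.
- exists omega; split; last by split => //; left.
  by apply: edge_in; [case: (u) Hu | rewrite -cats1 -catA cats1].
Qed.

Lemma path_from_omega q : is_state X q -> phi X q.1 omega q.
Proof.
case=> [->|]; first by split => //; left.
case: q => [[|a u] v] /= [//= _ [Hv Hm]].
exists ([:: a], u ++ v); split; last exact: (@petal_path u [:: a] v).
by apply: edge_out => //; case: (u) Hv.
Qed.

Lemma path_shape w p q : phi X w p q ->
  (exists z, inXstar X z /\ w = p.2 ++ z ++ q.1) \/
  (exists u1 v2, u1 != [::] /\ p = (u1, w ++ v2) /\ q = (u1 ++ w, v2) /\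
     u1 ++ w ++ v2 \in X).
Proof.
elim: w p => [|a w IH] p /=.
- case=> <- [->|[H1 [H2 H3]]].
  + by left; exists [::]; split => //; exact: inXstar_nil.
  + right; exists p.1, p.2; rewrite cats0 /=.
    by split => //; split; [case: (p) | split; [case: (p)|]].
- case=> r [[u b v Hu Hv Hm|b v Hv Hm|u b Hu Hm|b Hm] /IH
    [[z [Hz ->]]|[u1 [v2 [H1 [[E1 E2] [E3 E4]]]]]]] //=;
    try by rewrite -E1 in H1.
  + by left; exists z.
  + right; exists u, v2; rewrite E2; split => //; split => //.
    by rewrite E3 -E1 cat_rcons; split => //; rewrite -E2.
  + left; exists ((b :: v) ++ z); rewrite catA; split => //.
    by apply: inXstar_cat => //; exact: inXstar_X.
  + by left; exists [::]; split; [exact: inXstar_nil | rewrite E3 -E1].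
  + by left; exists z.
  + left; exists ([:: b] ++ z); split => //.
    by apply: inXstar_cat => //; exact: inXstar_X.
Qed.

Lemma loop_Xstar w : phi X w omega omega -> inXstar X w.
Proof.
by case/path_shape => [[z [Hz ->]] | [u1 [v2 [H1 [[E1 _] _]]]]];
  [rewrite /= cats0 | rewrite -E1 in H1].
Qed.

Lemma size_le_flatten y : y \in X -> size y <= size (flatten X).
Proof.
elim: X y => [//|z Z IH] y /=; rewrite in_cons size_cat.
by case/orP=> [/eqP ->|/IH H]; [exact: leq_addr | exact: leq_trans H (leq_addl _ _)].
Qed.

Lemma state_size p : is_state X p -> size (p.1 ++ p.2) <= size (flatten X).
Proof. by case=> [->|[_ [_ /size_le_flatten]]]. Qed.

Section NonemptyWords.
Hypothesis HX : forall x, x \in X -> x != [::].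

Lemma Xstar_loop w : inXstar X w -> phi X w omega omega.
Proof.
case=> s [Hs <-]; elim: s Hs => [|y s IH] /=; first by split => //; left.
case/andP=> Hy Hs; apply/phi_cat; exists omega; split; last exact: IH.
move: (HX Hy); case: y Hy => [//|a [|b y]] Hy _.
- by exists omega; split; [exact: edge_loop | split => //; left].
- have Hq : is_state X ([:: a], b :: y) by right.
  apply/(@phi_cat [:: a] (b :: y)); exists ([:: a], b :: y).
  by split; [exact: path_from_omega Hq | exact: path_to_omega Hq].
Qed.

Lemma path_through_omega p z q : is_state X p -> is_state X q -> inXstar X z ->
  phi X (p.2 ++ z ++ q.1) p q.
Proof.
move=> Hp Hq Hz; apply/phi_cat; exists omega; split; first exact: path_to_omega.
apply/phi_cat; exists omega; split; [exact: Xstar_loop | exact: path_from_omega].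
Qed.

End NonemptyWords.
End FlowerPaths.

Section Synchronization.
Variable A : finType.
Variable X : seq (seq A).
Hypothesis HX : forall x, x \in X -> x != [::].
Local Notation omega := (omega A).

(* A word longer than every word of X cannot stay inside one petal. *)
Lemma long_path_through_omega w p q : size (flatten X) <= size w ->
  phi X w p q -> exists z, inXstar X z /\ w = p.2 ++ z ++ q.1.
Proof.
move=> Hw /path_shape [//|[u1 [v2 [Hu1 [_ [_ /size_le_flatten Hm]]]]]].
move: (leq_trans Hm Hw); rewrite !size_cat addnCA -[X in _ <= X]addn0 leq_add2l.
by rewrite leqn0 addn_eq0 size_eq0 (negbTE Hu1).
Qed.

Lemma sync_cat x y : synchronizing X x -> inXstar X y -> synchronizing X (x ++ y).
Proof.
move=> Hs Hy u v; rewrite -!catA => /Hs [H1 H2]; split => //.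
by rewrite catA; exact: inXstar_cat.
Qed.

Section LongSynchronizingWord.
Variable x : seq A.
Hypothesis x_sync : synchronizing X x.
Hypothesis x_long : size (flatten X) <= size x.

Lemma sync_path_start y p q : phi X (x ++ x ++ y) p q ->
  exists s, x = p.2 ++ s /\ inXstar X (s ++ x).
Proof.
move=> H; have Hp := phi_state_l H; have Hq := phi_state_r H.
have [|z [Hz E]] := long_path_through_omega _ H.
  by rewrite size_cat (leq_trans x_long) ?leq_addr.
have Hpx : size p.2 <= size x.
  by apply: leq_trans x_long; move: (state_size Hp); rewrite size_cat; lia.
have [s [Ex Es]] := cat_split_prefix (esym E) Hpx.
exists s; split => //.
have : inXstar X (z ++ q.1 ++ q.2) by apply: inXstar_cat => //; exact: state_Xstar.
by rewrite catA Es -!catA => /x_sync [].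
Qed.

Lemma sync_path_end y p q : phi X (y ++ x ++ x) p q ->
  exists t, x = t ++ q.1 /\ inXstar X (x ++ t).
Proof.
move=> H; have Hp := phi_state_l H; have Hq := phi_state_r H.
have [|z [Hz E]] := long_path_through_omega _ H.
  by rewrite !size_cat (leq_trans x_long) // addnCA leq_addr.
have Hqx : size q.1 <= size x.
  by apply: leq_trans x_long; move: (state_size Hq); rewrite size_cat; lia.
rewrite catA [p.2 ++ _]catA in E.
have [t [Ex Et]] := cat_split_suffix (esym E) Hqx.
exists t; split => //.
have : inXstar X (p.1 ++ p.2 ++ z) by rewrite catA; apply: inXstar_cat => //; exact: state_Xstar.
by rewrite Et -!catA catA => /x_sync [].
Qed.

(* Hence phi(x^4) is rectangular: reroute through omega in the middle. *)
Lemma sync_power_rectangular : rectangular (phi X (x ++ x ++ x ++ x)).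
Proof.
move=> p q p' q' H H'.
have [s [Es Hs]] := sync_path_start H.
have [t [Et Ht]] : exists t, x = t ++ q'.1 /\ inXstar X (x ++ t).
  by apply: (@sync_path_end (x ++ x) p'); rewrite -catA.
have -> : x ++ x ++ x ++ x = p.2 ++ ((s ++ x) ++ (x ++ t)) ++ q'.1.
  transitivity ((p.2 ++ s) ++ x ++ x ++ (t ++ q'.1)); first by rewrite -Es -Et.
  by rewrite -!catA.
apply: (path_through_omega HX); [exact: phi_state_l H | exact: phi_state_r H' |].
exact: inXstar_cat.
Qed.

End LongSynchronizingWord.

Lemma synchronized_rectangular : synchronized X ->
  exists w, nonempty_rel (phi X w) /\ rectangular (phi X w).
Proof.
case=> x0 [Hx0 Hs0].
have HF : inXstar X (flatten X) by exists X; split => //; apply/allP.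
pose x := x0 ++ flatten X.
have Hx : inXstar X x := inXstar_cat Hx0 HF.
exists (x ++ x ++ x ++ x); split.
- exists omega, omega; apply: (Xstar_loop HX).
  by do 3! apply: inXstar_cat => //.
- apply: sync_power_rectangular; first exact: sync_cat.
  by rewrite /x size_cat leq_addl.
Qed.

Lemma rectangular_synchronized w :
  nonempty_rel (phi X w) -> rectangular (phi X w) -> synchronized X.
Proof.
case=> p [q Hpq] Hrect.
have Hp := phi_state_l Hpq; have Hq := phi_state_r Hpq.
exists (p.1 ++ w ++ q.2); split.
  apply: loop_Xstar; apply/phi_cat; exists p; split; first exact: path_from_omega.
  by apply/phi_cat; exists q; split => //; exact: path_to_omega.
move=> u v /(Xstar_loop HX).
case/phi_cat=> r0 [H0 /phi_cat [r3 [/phi_cat [r1 [H1 /phi_cat [r2 [H2 H3]]]] H4]]].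
split; apply: loop_Xstar.
- apply/phi_cat; exists r0; split => //.
  apply/phi_cat; exists r1; split => //.
  apply/phi_cat; exists q; split; [exact: Hrect H2 Hpq | exact: path_to_omega].
- apply/phi_cat; exists r3; split => //.
  apply/phi_cat; exists p; split; first exact: path_from_omega.
  by apply/phi_cat; exists r2; split => //; exact: Hrect Hpq H2.
Qed.

End Synchronization.

Theorem mainTheorem12 (A : finType) (X : seq (seq A))
  (HX : forall x, x \in X -> x != [::]) :
  synchronized X <-> is_degree X 1.
Proof.
rewrite degree_one_iff; split; first exact: synchronized_rectangular.
by case=> w [Hne Hrect]; exact: rectangular_synchronized Hne Hrect.
Qed.
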